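(* For all finite multisets $\Gamma,\Delta$ of ${\sf Frm_2}$-formulas: $\Gamma\Rightarrow\Delta$ is derivable in ${\sf GWF_{N_2}}$ if and only if $\Gamma^\square\Rightarrow\Delta^\square$ is derivable in ${\sf G3M_{Nec}}$.
   Context: Language: countably many atoms $p,q,\dots$, the constant $\bot$, and binary connectives $\wedge,\vee,\rightarrow$ ($\rightarrow$ is strict implication). ${\sf Frm}$ is the set of formulas built from atoms and $\bot$ with $\wedge,\vee,\rightarrow$; $A,B,C,D$ range over ${\sf Frm}$. Let $\supset$ be a new binary symbol (material implication) and ${\sf Frm_1}={\sf Frm}\cup\{A\supset B : A,B\in{\sf Frm}\}$ (no nesting of $\supset$). ${\sf Frm_2}$ is the smallest set containing ${\sf Frm_1}$ and closed under $\wedge$ and $\vee$; $X,Y$ range over ${\sf Frm_2}$. A sequent is $\Gamma\Rightarrow\Delta$ with $\Gamma,\Delta$ finite multisets of ${\sf Frm_2}$-formulas. The calculus ${\sf GWF_{N_2}}$ has initial sequents $(id)$ $p,\Gamma\Rightarrow\Delta,p$ ($p$ an atom) and $(L_\bot)$ $\bot,\Gamma\Rightarrow\Delta$, and rules (premises / conclusion): $(L_\wedge)$ $X,Y,\Gamma\Rightarrow\Delta$ / $X\wedge Y,\Gamma\Rightarrow\Delta$; $(R_\wedge)$ $\Gamma\Rightarrow\Delta,X$ and $\Gamma\Rightarrow\Delta,Y$ / $\Gamma\Rightarrow\Delta,X\wedge Y$; $(L_\vee)$ $X,\Gamma\Rightarrow\Delta$ and $Y,\Gamma\Rightarrow\Delta$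 / $X\vee Y,\Gamma\Rightarrow\Delta$; $(R_\vee)$ $\Gamma\Rightarrow\Delta,X,Y$ / $\Gamma\Rightarrow\Delta,X\vee Y$; $(L_\supset)$ $\Gamma\Rightarrow\Delta,A$ and $B,\Gamma\Rightarrow\Delta$ / $A\supset B,\Gamma\Rightarrow\Delta$; $(R_\supset)$ $A,\Gamma\Rightarrow\Delta,B$ / $\Gamma\Rightarrow\Delta,A\supset B$; $(LR_\rightarrow)$ $C\supset D,A\Rightarrow B$ / $\Gamma,C\rightarrow D\Rightarrow\Delta,A\rightarrow B$; $(R_\rightarrow)$ $A\Rightarrow B$ / $\Gamma\Rightarrow\Delta,A\rightarrow B$. Here $A,B,C,D\in{\sf Frm}$, $X,Y\in{\sf Frm_2}$, and $\Gamma,\Delta$ are arbitrary finite multisets of ${\sf Frm_2}$-formulas. The modal language $\mathcal{L}_\square$ has atoms, $\bot$, binary $\wedge,\vee,\supset$ and unary $\square$. The sequent calculus ${\sf G3M_{Nec}}$ (sequents $\Gamma\Rightarrow\Delta$ of finite multisets of $\mathcal{L}_\square$-formulas; here $A,B$ are arbitrary $\mathcal{L}_\square$-formulas) has initial sequents $p,\Gamma\Rightarrow\Delta,p$ ($p$ an atom) and $\bot,\Gamma\Rightarrow\Delta$; rules: $A,B,\Gamma\Rightarrow\Delta$ / $A\wedge B,\Gamma\Rightarrow\Delta$; $\Gamma\Rightarrow\Delta,A$ and $\Gamma\Rightarrow\Delta,B$ / $\Gamma\Rightarrow\Delta,A\wedge B$; $A,\Gamma\Rightarrow\Delta$ and $B,\Gamma\Rightarrow\Delta$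 / $A\vee B,\Gamma\Rightarrow\Delta$; $\Gamma\Rightarrow\Delta,A,B$ / $\Gamma\Rightarrow\Delta,A\vee B$; $\Gamma\Rightarrow\Delta,A$ and $B,\Gamma\Rightarrow\Delta$ / $A\supset B,\Gamma\Rightarrow\Delta$; $A,\Gamma\Rightarrow\Delta,B$ / $\Gamma\Rightarrow\Delta,A\supset B$; $(LR_{M_\square})$ $A\Rightarrow B$ / $\square A,\Gamma\Rightarrow\Delta,\square B$; $(R_{N_\square})$ $\Rightarrow B$ / $\Gamma\Rightarrow\Delta,\square B$. The $\square$-translation from formulas built with $\wedge,\vee,\rightarrow,\supset,\bot$ into $\mathcal{L}_\square$ is: $p^\square=p$, $\bot^\square=\bot$, $(A\circ B)^\square=A^\square\circ B^\square$ for $\circ\in\{\wedge,\vee,\supset\}$, $(A\rightarrow B)^\square=\square(A^\square\supset B^\square)$; for a multiset $\Gamma$, $\Gamma^\square=\{A^\square : A\in\Gamma\}$ (as a multiset). *)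

(* Sequents are pairs of lists; multisets are modelled as
   lists closed under permutation (explicit exchange rule). *)
From Stdlib Require Import List Permutation.
Import ListNotations.

Inductive form : Type :=
| FAtom : nat -> form
| FBot : form
| FAnd : form -> form -> form
| FOr : form -> form -> form
| FSImp : form -> form -> form
| FMImp : form -> form -> form.

Fixpoint isFrm (A : form) : Prop :=
  match A with
  | FAtom _ | FBot => True
  | FAnd A B | FOr A B | FSImp A B => isFrm A /\ isFrm B
  | FMImp _ _ => False
  end.

Definition isFrm1 (X : form) : Prop :=
  isFrm X \/ exists A B, X = FMImp A B /\ isFrm A /\ isFrm B.

Inductive isFrm2 : form -> Prop :=
| Frm2_base : forall X, isFrm1 X -> isFrm2 X
| Frm2_and : forall X Y, isFrm2 X -> isFrm2 Y -> isFrm2 (FAnd X Y)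
| Frm2_or : forall X Y, isFrm2 X -> isFrm2 Y -> isFrm2 (FOr X Y).

Definition allFrm2 (G : list form) : Prop := Forall isFrm2 G.

Inductive GWF : list form -> list form -> Prop :=
| GWF_exch : forall G D G' D', GWF G D -> Permutation G G' -> Permutation D D' -> GWF G' D'
| GWF_id : forall p G D, allFrm2 G -> allFrm2 D -> GWF (FAtom p :: G) (FAtom p :: D)
| GWF_Lbot : forall G D, allFrm2 G -> allFrm2 D -> GWF (FBot :: G) D
| GWF_Land : forall X Y G D, isFrm2 X -> isFrm2 Y ->
    GWF (X :: Y :: G) D -> GWF (FAnd X Y :: G) D
| GWF_Rand : forall X Y G D, isFrm2 X -> isFrm2 Y ->
    GWF G (X :: D) -> GWF G (Y :: D) -> GWF G (FAnd X Y :: D)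
| GWF_Lor : forall X Y G D, isFrm2 X -> isFrm2 Y ->
    GWF (X :: G) D -> GWF (Y :: G) D -> GWF (FOr X Y :: G) D
| GWF_Ror : forall X Y G D, isFrm2 X -> isFrm2 Y ->
    GWF G (X :: Y :: D) -> GWF G (FOr X Y :: D)
| GWF_Lmimp : forall A B G D, isFrm A -> isFrm B ->
    GWF G (A :: D) -> GWF (B :: G) D -> GWF (FMImp A B :: G) D
| GWF_Rmimp : forall A B G D, isFrm A -> isFrm B ->
    GWF (A :: G) (B :: D) -> GWF G (FMImp A B :: D)
| GWF_LRsimp : forall A B C D G Dl, isFrm A -> isFrm B -> isFrm C -> isFrm D ->
    allFrm2 G -> allFrm2 Dl ->
    GWF [FMImp C D; A] [B] -> GWF (FSImp C D :: G) (FSImp A B :: Dl)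
| GWF_Rsimp : forall A B G D, isFrm A -> isFrm B -> allFrm2 G -> allFrm2 D ->
    GWF [A] [B] -> GWF G (FSImp A B :: D).

Inductive mform : Type :=
| MAtom : nat -> mform
| MBot : mform
| MAnd : mform -> mform -> mform
| MOr : mform -> mform -> mform
| MImp : mform -> mform -> mform
| MBox : mform -> mform.

Inductive G3M : list mform -> list mform -> Prop :=
| G3M_exch : forall G D G' D', G3M G D -> Permutation G G' -> Permutation D D' -> G3M G' D'
| G3M_id : forall p G D, G3M (MAtom p :: G) (MAtom p :: D)
| G3M_Lbot : forall G D, G3M (MBot :: G) D
| G3M_Land : forall A B G D, G3M (A :: B :: G) D -> G3M (MAnd A B :: G) D
| G3M_Rand : forall A B G D, G3M G (A :: D) -> G3M G (B :: D) -> G3M G (MAnd A B :: D)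
| G3M_Lor : forall A B G D, G3M (A :: G) D -> G3M (B :: G) D -> G3M (MOr A B :: G) D
| G3M_Ror : forall A B G D, G3M G (A :: B :: D) -> G3M G (MOr A B :: D)
| G3M_Limp : forall A B G D, G3M G (A :: D) -> G3M (B :: G) D -> G3M (MImp A B :: G) D
| G3M_Rimp : forall A B G D, G3M (A :: G) (B :: D) -> G3M G (MImp A B :: D)
| G3M_LRM : forall A B G D, G3M [A] [B] -> G3M (MBox A :: G) (MBox B :: D)
| G3M_RN : forall B G D, G3M [] [B] -> G3M G (MBox B :: D).

Fixpoint boxtr (A : form) : mform :=
  match A with
  | FAtom p => MAtom p
  | FBot => MBot
  | FAnd A B => MAnd (boxtr A) (boxtr B)
  | FOr A B => MOr (boxtr A) (boxtr B)
  | FMImp A B => MImp (boxtr A) (boxtr B)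
  | FSImp A B => MBox (MImp (boxtr A) (boxtr B))
  end.

From Stdlib Require Import List Permutation.
Import ListNotations.

(* Every GWF rule is mapped by the box-translation onto a G3M rule; the two
   modal rules need one extra right-implication step, since the premise
   [C ⊃ D, A ⇒ B] of (LR->) becomes [□(C ⊃ D) ⇒ □(A ⊃ B)] only through
   [C ⊃ D ⇒ A ⊃ B].  Conversely, the translation is injective and preserves
   the principal connective, so a G3M derivation of a translated sequent can
   be read back rule by rule; the only premise that is not literally the
   translation of a GWF premise is the one of (LR_M) or (R_N), and the
   required premise is recovered from it by the invertibility of (R_⊃) in
   GWF. *)

Lemma isFrm2_of_isFrm (A : form) : isFrm A -> isFrm2 A.
Proof. intros; constructor; now left. Qed.

Lemma isFrm2_MImp (A B : form) : isFrm A -> isFrm B -> isFrm2 (FMImp A B).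
Proof. intros; constructor; right; now exists A, B. Qed.

#[local] Hint Resolve isFrm2_of_isFrm isFrm2_MImp : core.
#[local] Hint Constructors Forall : core.
#[local] Hint Unfold allFrm2 : core.

Lemma isFrm2_FAnd_inv (X Y : form) : isFrm2 (FAnd X Y) -> isFrm2 X /\ isFrm2 Y.
Proof.
  intros H; inversion H as [? HX | |]; subst; auto.
  destruct HX as [[] | (? & ? & E & _)]; [auto | discriminate].
Qed.

Lemma isFrm2_FOr_inv (X Y : form) : isFrm2 (FOr X Y) -> isFrm2 X /\ isFrm2 Y.
Proof.
  intros H; inversion H as [? HX | |]; subst; auto.
  destruct HX as [[] | (? & ? & E & _)]; [auto | discriminate].
Qed.

Lemma isFrm2_FMImp_inv (A B : form) : isFrm2 (FMImp A B) -> isFrm A /\ isFrm B.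
Proof.
  intros H; inversion H as [? HX | |]; subst.
  destruct HX as [[] | (? & ? & E & ?)]; injection E as -> ->; auto.
Qed.

Lemma isFrm2_FSImp_inv (A B : form) : isFrm2 (FSImp A B) -> isFrm A /\ isFrm B.
Proof.
  intros H; inversion H as [? HX | |]; subst.
  destruct HX as [? | (? & ? & E & _)]; [auto | discriminate].
Qed.

Lemma allFrm2_perm {l l' : list form} : Permutation l l' -> allFrm2 l -> allFrm2 l'.
Proof. intros P; unfold allFrm2; now rewrite P. Qed.

Lemma allFrm2_cons_inv {X : form} {l : list form} :
  allFrm2 (X :: l) -> isFrm2 X /\ allFrm2 l.
Proof. now inversion 1. Qed.

Lemma GWF_sound (G D : list form) : GWF G D -> G3M (map boxtr G) (map boxtr D).
Proof.
  induction 1; simpl in *.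
  - eapply G3M_exch; eauto using Permutation_map.
  - apply G3M_id.
  - apply G3M_Lbot.
  - now apply G3M_Land.
  - now apply G3M_Rand.
  - now apply G3M_Lor.
  - now apply G3M_Ror.
  - now apply G3M_Limp.
  - now apply G3M_Rimp.
  - apply G3M_LRM, G3M_Rimp.
    eapply G3M_exch; [eassumption | apply perm_swap | reflexivity].
  - now apply G3M_RN, G3M_Rimp.
Qed.

Lemma GWF_middle_cons_l (a : form) (l G D : list form) :
  GWF (a :: l ++ G) D -> GWF (l ++ a :: G) D.
Proof. intros H; eapply GWF_exch; [exact H | apply Permutation_middle | reflexivity]. Qed.

Lemma GWF_cons_middle_l (a : form) (l G D : list form) :
  GWF (l ++ a :: G) D -> GWF (a :: l ++ G) D.
Proof.
  intros H; eapply GWF_exch; [exact H | symmetry; apply Permutation_middle | reflexivity].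
Qed.

Lemma GWF_middle_cons_r (a : form) (l G D : list form) :
  GWF G (a :: l ++ D) -> GWF G (l ++ a :: D).
Proof. intros H; eapply GWF_exch; [exact H | reflexivity | apply Permutation_middle]. Qed.

Lemma Permutation_cons_cases {T : Type} {x y : T} {l m : list T} :
  Permutation (x :: l) (y :: m) ->
  (x = y /\ Permutation l m) \/
  exists k, Permutation m (x :: k) /\ Permutation l (y :: k).
Proof.
  intros P.
  destruct (Permutation_in x P (or_introl eq_refl)) as [<- | I].
  - left; split; [reflexivity | exact (Permutation_cons_inv P)].
  - right; destruct (in_split _ _ I) as [m1 [m2 ->]].
    exists (m1 ++ m2); split; [symmetry; apply Permutation_middle |].
    apply (Permutation_cons_inv (a := x)).
    rewrite P, <- Permutation_middle; apply perm_swap.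
Qed.

(* The occurrence of [A ⊃ B] is tracked up to exchange, since exchange steps
   may move it anywhere in the succedent. *)
Lemma GWF_Rmimp_inv_perm (G D : list form) : GWF G D ->
  forall A B D0, Permutation D (FMImp A B :: D0) -> isFrm A -> isFrm B ->
  GWF (A :: G) (B :: D0).
Proof.
  induction 1 as [G D G' D' _ IH PG PD | p G D HG HD | G D HG HD
    | X Y G D HX HY _ IH | X Y G D HX HY _ IH1 _ IH2 | X Y G D HX HY _ IH1 _ IH2
    | X Y G D HX HY _ IH | A B G D HA HB _ IH1 _ IH2 | A B G D HA HB Hprem IH
    | A B C E G D HA HB HC HE HG HD Hprem _ | A B G D HA HB HG HD Hprem _];
    intros A0 B0 D0 P HA0 HB0;
    try (destruct (Permutation_cons_cases P) as [[Heq P'] | [k [P1 P2]]];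
         [try discriminate |
          eapply GWF_exch; [| reflexivity | symmetry; rewrite P1; apply perm_swap]]).
  - eapply GWF_exch; [apply IH | apply perm_skip, PG | reflexivity]; auto.
    now rewrite PD.
  - apply (GWF_cons_middle_l _ [_]), GWF_id; auto.
    destruct (allFrm2_cons_inv (allFrm2_perm P2 HD)); auto.
  - apply (GWF_cons_middle_l _ [_]), GWF_Lbot; auto.
    destruct (allFrm2_cons_inv (allFrm2_perm P HD)); auto.
  - apply (GWF_cons_middle_l _ [_]), GWF_Land; auto.
    apply (GWF_middle_cons_l _ [X; Y]), IH; auto.
  - apply GWF_Rand; auto; apply (GWF_middle_cons_r _ [_]).
    + apply IH1; auto. now rewrite P2; apply perm_swap.
    + apply IH2; auto. now rewrite P2; apply perm_swap.
  - apply (GWF_cons_middle_l _ [_]), GWF_Lor; auto;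
      [apply (GWF_middle_cons_l _ [X]), IH1 | apply (GWF_middle_cons_l _ [Y]), IH2]; auto.
  - apply GWF_Ror; auto; apply (GWF_middle_cons_r _ [X; Y]), IH; auto.
    rewrite P2; symmetry; apply (Permutation_middle [X; Y]).
  - apply (GWF_cons_middle_l _ [_]), GWF_Lmimp; auto.
    + apply (GWF_middle_cons_r _ [A]), IH1; auto. now rewrite P; apply perm_swap.
    + apply (GWF_middle_cons_l _ [B]), IH2; auto.
  - injection Heq as -> ->.
    eapply GWF_exch; [exact Hprem | reflexivity | now apply perm_skip].
  - apply GWF_Rmimp; auto.
    eapply GWF_exch; [apply (IH A0 B0 (B :: k)) | apply perm_swap | apply perm_swap]; auto.
    now rewrite P2; apply perm_swap.
  - apply (GWF_cons_middle_l _ [_]), GWF_LRsimp; auto.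
    destruct (allFrm2_cons_inv (allFrm2_perm P2 HD)); auto.
  - apply GWF_Rsimp; auto.
    destruct (allFrm2_cons_inv (allFrm2_perm P2 HD)); auto.
Qed.

Lemma GWF_Rmimp_inv (A B : form) (G D : list form) : isFrm A -> isFrm B ->
  GWF G (FMImp A B :: D) -> GWF (A :: G) (B :: D).
Proof. intros HA HB H; now apply (GWF_Rmimp_inv_perm _ _ H). Qed.

Ltac invert_translation :=
  repeat match goal with
  | H : _ :: _ = map boxtr ?G |- _ =>
      destruct G; simpl in H; [discriminate | injection H as ? ?; subst]
  | H : _ = boxtr ?f |- _ =>
      destruct f; simpl in H; try discriminate; try (injection H as; subst)
  | H : allFrm2 (_ :: _) |- _ => apply allFrm2_cons_inv in H as [? ?]
  | H : isFrm2 (FAnd _ _) |- _ => apply isFrm2_FAnd_inv in H as [? ?]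
  | H : isFrm2 (FOr _ _) |- _ => apply isFrm2_FOr_inv in H as [? ?]
  | H : isFrm2 (FMImp _ _) |- _ => apply isFrm2_FMImp_inv in H as [? ?]
  | H : isFrm2 (FSImp _ _) |- _ => apply isFrm2_FSImp_inv in H as [? ?]
  end.

Lemma G3M_complete (G' D' : list mform) : G3M G' D' ->
  forall G D, G' = map boxtr G -> D' = map boxtr D -> allFrm2 G -> allFrm2 D ->
  GWF G D.
Proof.
  induction 1 as [G' D' G'' D'' _ IH PG PD | | | | | | | | | A B G' D' _ IH | B G' D' _ IH];
    intros G0 D0 EG ED HG HD; subst.
  - destruct (Permutation_map_inv _ _ PG) as [G1 [-> PG1]].
    destruct (Permutation_map_inv _ _ PD) as [D1 [-> PD1]].
    eapply GWF_exch; [apply IH | ..]; eauto using allFrm2_perm, Permutation_sym.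
  - invert_translation. now apply GWF_id.
  - invert_translation. now apply GWF_Lbot.
  - invert_translation. apply GWF_Land; auto.
  - invert_translation. apply GWF_Rand; auto.
  - invert_translation. apply GWF_Lor; auto.
  - invert_translation. apply GWF_Ror; auto.
  - invert_translation. apply GWF_Lmimp; auto.
  - invert_translation. apply GWF_Rmimp; auto.
  - invert_translation. apply GWF_LRsimp; auto.
    apply (GWF_cons_middle_l _ [_] []), GWF_Rmimp_inv; auto.
  - invert_translation. apply GWF_Rsimp, GWF_Rmimp_inv; auto.
Qed.

Theorem theorem4p1 : forall (G D : list form), allFrm2 G -> allFrm2 D ->
  (GWF G D <-> G3M (map boxtr G) (map boxtr D)).
Proof.
  intros G D HG HD; split.
  - apply GWF_sound.
  - intros H; exact (G3M_complete _ _ H G D eq_refl eq_refl HG HD).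
Qed.
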